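(* Consider a Gaussian linear concentration model on a subspace $L\subseteq\mathrm{Sym}(p)$ with $I_p\in L$, and let $W$ be a positive semidefinite matrix (e.g. $W=n^{-1}\sum_ix^i(x^i)^\top$). If the score matching equation $\Pi_L(K\circ W)=I_p$ has a unique solution $K\in L$ (equivalently, the linear map $K\mapsto\Pi_L(K\circ W)$ on $L$ has trivial kernel), then the maximum likelihood estimate exists, i.e. $\ell(K)=\log\det K-\operatorname{tr}(KW)$ attains its maximum on $L\cap\mathrm{Sym}_+(p)$.
   Context: $\mathrm{Sym}(p)$: real symmetric $p\times p$ matrices with trace inner product; $\mathrm{Sym}_+(p)$: positive definite elements; $\Pi_L$: orthogonal projection onto $L$; $A\circ B=(AB^\top+BA^\top)/2$. The model is $\{N_p(0,K^{-1}):K\in L\cap\mathrm{Sym}_+(p)\}$. *)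

From HB Require Import structures.
From Stdlib Require Import Reals ClassicalEpsilon FunctionalExtensionality.
From mathcomp Require Import all_boot all_algebra.
Set Implicit Arguments. Unset Strict Implicit. Unset Printing Implicit Defensive.

Definition R_eqb (x y : R) : bool :=
  if Req_EM_T x y then true else false.
Lemma R_eqP : Equality.axiom R_eqb.
Proof. move=> x y; rewrite /R_eqb; case: Req_EM_T => H; by constructor. Qed.
HB.instance Definition _ := hasDecEq.Build R R_eqP.

Definition R_find (P : pred R) (n : nat) : option R :=
  match excluded_middle_informative (exists x, P x) with
  | left H => Some (proj1_sig (constructive_indefinite_description _ H))
  | right _ => None
  end.
Lemma R_find_correct P n x : R_find P n = Some x -> P x.
Proof.
rewrite /R_find; case: excluded_middle_informative => // H [<-].
exact: proj2_sig (constructive_indefinite_description _ H).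
Qed.
Lemma R_find_complete (P : pred R) : (exists x, P x) -> exists n, R_find P n.
Proof. move=> H; exists 0%N; rewrite /R_find; by case: excluded_middle_informative. Qed.
Lemma R_find_ext (P Q : pred R) : P =1 Q -> R_find P =1 R_find Q.
Proof. move=> H; have -> : P = Q by apply: functional_extensionality. by []. Qed.
HB.instance Definition _ := hasChoice.Build R R_find_correct R_find_complete R_find_ext.

Lemma R_addA : ssrfun.associative Rplus. Proof. move=> x y z; by rewrite Rplus_assoc. Qed.
Lemma R_addC : ssrfun.commutative Rplus. Proof. exact: Rplus_comm. Qed.
Lemma R_add0 : ssrfun.left_id R0 Rplus. Proof. exact: Rplus_0_l. Qed.
Lemma R_addN : ssrfun.left_inverse R0 Ropp Rplus. Proof. exact: Rplus_opp_l. Qed.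
HB.instance Definition _ := GRing.isZmodule.Build R R_addA R_addC R_add0 R_addN.

Lemma R_mulA : ssrfun.associative Rmult. Proof. move=> x y z; by rewrite Rmult_assoc. Qed.
Lemma R_mulC : ssrfun.commutative Rmult. Proof. exact: Rmult_comm. Qed.
Lemma R_mul1 : ssrfun.left_id R1 Rmult. Proof. exact: Rmult_1_l. Qed.
Lemma R_mulDl : ssrfun.left_distributive Rmult Rplus.
Proof. move=> x y z; exact: Rmult_plus_distr_r. Qed.
Lemma R_one_neq0 : (R1 : R) != R0 :> R.
Proof. apply/eqP; exact: R1_neq_R0. Qed.
HB.instance Definition _ :=
  GRing.Zmodule_isComNzRing.Build R R_mulA R_mulC R_mul1 R_mulDl R_one_neq0.

Local Open Scope ring_scope.

Definition symmetric (p : nat) (A : 'M[R]_p) : Prop := A^T = A.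

Definition posdef (p : nat) (A : 'M[R]_p) : Prop :=
  symmetric A /\
  forall x : 'cV[R]_p, x <> 0 -> Rlt R0 ((x^T *m A *m x) ord0 ord0).

Definition psd (p : nat) (A : 'M[R]_p) : Prop :=
  symmetric A /\
  forall x : 'cV[R]_p, Rle R0 ((x^T *m A *m x) ord0 ord0).

Definition subspace_of_Sym (p : nat) (L : 'M[R]_p -> Prop) : Prop :=
  [/\ L 0,
      (forall A B, L A -> L B -> L (A + B)),
      (forall (c : R) A, L A -> L (c *: A)) &
      (forall A, L A -> symmetric A)].

Definition tr_inner (p : nat) (A B : 'M[R]_p) : R := \tr (A *m B).

Definition circ (p : nat) (A B : 'M[R]_p) : 'M[R]_p :=
  (Rinv (IZR 2)) *: (A *m B^T + B *m A^T).

(* "Pi_L X = Y": Y is the orthogonal projection of X onto L w.r.t. <.,.> *)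
Definition is_projL (p : nat) (L : 'M[R]_p -> Prop) (X Y : 'M[R]_p) : Prop :=
  L Y /\ forall M, L M -> tr_inner (X - Y) M = R0.

Definition loglik (p : nat) (W K : 'M[R]_p) : R :=
  Rminus (ln (\det K)) (\tr (K *m W)).

From HB Require Import structures.
From Stdlib Require Import Reals.
From mathcomp Require Import all_boot all_order all_algebra ring zify.
From mathcomp Require Import fingroup perm.
From mathcomp Require Import boolp classical_sets reals topology normedtype.
From mathcomp Require Import sequences derive exp.
From mathcomp Require Import Rstruct Rstruct_topology.
Set Implicit Arguments. Unset Strict Implicit. Unset Printing Implicit Defensive.
Import Order.TTheory GRing.Theory Num.Theory.
Import numFieldNormedType.Exports.
Local Open Scope ring_scope.

(* If D in L is psd with tr(D W) = 0, then D W = 0 (psd matrices are Gram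
   matrices, obtained by symmetric Gaussian elimination), so D o W = 0 and
   K + D solves the score matching equation whenever K does: uniqueness thus
   excludes such "null directions" D <> 0.  Without null directions the MLE
   exists.  In coordinates c of L, the energy h(c) = tr(K(c) W) is coercive on
   the closed cone of psd coordinates (compactness of its unit sphere), while
   |det K(c)| grows polynomially; so g(c) = det K(c) exp(-h(c)) is continuous
   with bounded superlevel sets on that cone and attains its maximum there, at
   a positive definite point.  Finally g = exp(l) on positive definite
   matrices, whose determinant is positive. *)

Lemma lin_coef_eq0 (F : realFieldType) (a b : F) : 0 <= a ->
  (forall t, 0 <= t * b *+ 2 + t ^+ 2 * a) -> b = 0.
Proof.
move=> a0 h; set t := - b / (a + 1).
have a1 : a + 1 != 0 by rewrite gt_eqF // ltr_wpDl.
have ht : t * (a + 1) = - b by rewrite /t mulfVK.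
have := h t; rewrite -(pmulr_lge0 _ (exprn_gt0 2 (ltr_wpDl a0 ltr01))).
have -> : (t * b *+ 2 + t ^+ 2 * a) * (a + 1) ^+ 2 = - (b ^+ 2 * (a + 2)).
  have -> : (t * b *+ 2 + t ^+ 2 * a) * (a + 1) ^+ 2 =
     (t * (a + 1)) * b * (a + 1) *+ 2 + (t * (a + 1)) ^+ 2 * a by ring.
  by rewrite ht; ring.
rewrite oppr_ge0 pmulr_lle0; last by rewrite ltr_wpDl // ltr0n.
by move=> b2; apply/eqP; rewrite -sqrf_eq0 eq_le b2 sqr_ge0.
Qed.

Section QuadraticForms.
Variables (F : rcfType) (n : nat).
Implicit Types (A B : 'M[F]_n) (x y : 'cV[F]_n).

Definition qform A x y : F := (x^T *m A *m y) 0 0.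
Definition symmx A : Prop := A^T = A.
Definition psdmx A : Prop := symmx A /\ forall x, 0 <= qform A x x.
Definition pdmx A : Prop := symmx A /\ forall x, x != 0 -> 0 < qform A x x.

Lemma qformDl A x y z : qform A (x + y) z = qform A x z + qform A y z.
Proof. by rewrite /qform linearD !mulmxDl mxE. Qed.
Lemma qformDr A x y z : qform A x (y + z) = qform A x y + qform A x z.
Proof. by rewrite /qform mulmxDr mxE. Qed.
Lemma qformZl A a x y : qform A (a *: x) y = a * qform A x y.
Proof. by rewrite /qform linearZ -!scalemxAl mxE. Qed.
Lemma qformZr A a x y : qform A x (a *: y) = a * qform A x y.
Proof. by rewrite /qform -scalemxAr mxE. Qed.
Lemma qformD A B x y : qform (A + B) x y = qform A x y + qform B x y.
Proof. by rewrite /qform mulmxDr mulmxDl mxE. Qed.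
Lemma qformZ a A x y : qform (a *: A) x y = a * qform A x y.
Proof. by rewrite /qform -scalemxAr -scalemxAl mxE. Qed.
Lemma qformB A B x y : qform (A - B) x y = qform A x y - qform B x y.
Proof. by rewrite qformD -scaleN1r qformZ mulN1r. Qed.

Lemma qform_sym A x y : symmx A -> qform A x y = qform A y x.
Proof.
move=> sA; have -> : qform A x y = (x^T *m A *m y)^T 0 0 by rewrite mxE.
by rewrite !trmx_mul trmxK sA mulmxA.
Qed.

Lemma qform_line A x y t : symmx A ->
  qform A (x + t *: y) (x + t *: y) =
  qform A x x + t * qform A y x *+ 2 + t ^+ 2 * qform A y y.
Proof.
move=> sA; rewrite qformDl !qformDr !qformZl !qformZr (qform_sym x y sA); ring.
Qed.

Lemma qform_delta A i j : qform A (delta_mx i 0) (delta_mx j 0) = A i j.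
Proof. by rewrite /qform trmx_delta -rowE -colE !mxE. Qed.

Lemma qform1 x : qform 1%:M x x = \sum_i x i 0 ^+ 2.
Proof. by rewrite /qform mulmx1 mxE; apply: eq_bigr => i _; rewrite mxE expr2. Qed.

Lemma pdmx1 : pdmx 1%:M.
Proof.
split=> [|x]; first exact: trmx1.
apply: contraNT; rewrite -leNgt qform1 => le0; apply/eqP/matrixP => i j.
rewrite (ord1 j) mxE; apply/eqP; rewrite -sqrf_eq0.
have /psumr_eq0P-> // : \sum_i x i 0 ^+ 2 = 0.
  by apply/eqP; rewrite eq_le le0 sumr_ge0 // => k _; exact: sqr_ge0.
by move=> k _; exact: sqr_ge0.
Qed.

Lemma psd_kernel A x : psdmx A -> qform A x x = 0 -> A *m x = 0.
Proof.
move=> [sA pA] qx0.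
have ortho y : qform A y x = 0.
  apply: (lin_coef_eq0 (pA y)) => t.
  by have := pA (x + t *: y); rewrite qform_line // qx0 add0r.
have /eqP : qform 1%:M (A *m x) (A *m x) = 0.
  by rewrite /qform mulmx1 -(ortho (A *m x)) /qform trmx_mul -mulmxA.
by apply: contraTeq => nz; rewrite gt_eqF //; exact: pdmx1.2.
Qed.

Lemma psd_diag0 A j : psdmx A -> A j j = 0 -> forall i, A i j = 0.
Proof.
move=> pA Ajj i; have /matrixP/(_ i 0) : A *m delta_mx j (0 : 'I_1) = 0.
  by apply: psd_kernel; rewrite // qform_delta.
by rewrite -colE !mxE.
Qed.

Lemma qform_rank1 (u : 'cV[F]_n) x : qform (u *m u^T) x x = ((x^T *m u) 0 0) ^+ 2.
Proof.
rewrite /qform !mulmxA -(mulmxA _ u^T) -[u^T *m x]trmxK trmx_mul trmxK.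
by rewrite [in LHS]mxE big_ord1 [X in _ * X]mxE expr2.
Qed.

(* One step of symmetric Gaussian elimination with pivot i, as in the
   Cholesky decomposition. *)
Definition schur_step A i := A - (A i i)^-1 *: (col i A *m (col i A)^T).

Lemma schur_step_psd A i : psdmx A -> 0 < A i i -> psdmx (schur_step A i).
Proof.
move=> [sA pA] a_gt0; split.
  by rewrite /symmx /schur_step linearB linearZ /= trmx_mul trmxK sA.
move=> x; rewrite qformB qformZ qform_rank1.
set b := (x^T *m col i A) 0 0.
have bE : qform A (delta_mx i 0) x = b.
  by rewrite qform_sym // /b /qform colE mulmxA.
have := pA (x + (- b / A i i) *: delta_mx i 0).
rewrite qform_line // qform_delta bE.
suff -> : qform A x x - (A i i)^-1 * b ^+ 2 =
  qform A x x + - b / A i i * b *+ 2 + (- b / A i i) ^+ 2 * A i i by [].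
by field; rewrite gt_eqF.
Qed.

Lemma schur_step_diag A i j :
  schur_step A i j j = A j j - (A i i)^-1 * A j i ^+ 2.
Proof. by rewrite /schur_step !mxE big_ord1 !mxE expr2. Qed.

Lemma psd_zero_diag A : psdmx A -> (forall j, A j j = 0) -> A = 0.
Proof. by move=> pA A0; apply/matrixP => i j; rewrite mxE; apply: psd_diag0. Qed.

(* Every psd matrix is a Gram matrix M M^T (M need not be square); the
   induction is on the number of nonzero diagonal entries. *)
Lemma psd_factor A : psdmx A -> exists m (M : 'M[F]_(n, m)), A = M *m M^T.
Proof.
move: {2}#|_| (leqnn #|[set j | A j j != 0]|) => k.
elim: k A => [|k IH] A supp pA.
  exists 0%N, 0; rewrite mul0mx; apply: psd_zero_diag => // j; apply/eqP.
  apply: contraTT supp => Ajj; rewrite -ltnNge card_gt0.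
  by apply/set0Pn; exists j; rewrite inE.
have [i /= Aii | diag0] := pickP [pred i | A i i != 0]; last first.
  exists 0%N, 0; rewrite mul0mx; apply: psd_zero_diag => // j.
  by apply/eqP; have /negbFE := diag0 j.
have a_gt0 : 0 < A i i by rewrite lt0r Aii -qform_delta pA.2.
set A' := schur_step A i.
have supp' : (#|[set j | A' j j != 0%R]| <= k)%N.
  rewrite -ltnS; apply: leq_trans supp; apply: proper_card; apply/fintype.properP.
  split; last by exists i; rewrite !inE // schur_step_diag expr2 mulKf ?subrr ?eqxx.
  apply/fintype.subsetP => j; rewrite !inE schur_step_diag; apply: contraNN => /eqP Ajj.
  have Aji : A j i = 0 by rewrite -[A]pA.1 mxE psd_diag0.
  by rewrite Ajj Aji expr2 !mulr0 subrr.
have [m [M' AE]] := IH A' supp' (schur_step_psd pA a_gt0).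
exists (m + 1)%N, (row_mx M' ((Num.sqrt (A i i))^-1 *: col i A)).
rewrite tr_row_mx mul_row_col -AE linearZ /= -scalemxAl -scalemxAr scalerA.
by rewrite -invfM -expr2 sqr_sqrtr ?ltW // /A' /schur_step subrK.
Qed.

(* tr(A W) is a sum of values of the form of A when W is a Gram matrix. *)
Lemma trace_psd A W : psdmx A -> psdmx W ->
  0 <= \tr (A *m W) /\ (\tr (A *m W) = 0 -> A *m W = 0).
Proof.
move=> pA pW; have [m [N ->]] := psd_factor pW.
have trE : \tr (A *m (N *m N^T)) = \sum_j qform A (col j N) (col j N).
  rewrite mulmxA mxtrace_mulC mulmxA /mxtrace; apply: eq_bigr => j _.
  rewrite /qform tr_col -row_mul !mxE; apply: eq_bigr => k _; rewrite !mxE.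
  by congr (_ * _); apply: eq_bigr => l _; rewrite !mxE.
rewrite trE; split => [|tr0]; first by apply: sumr_ge0 => j _; exact: pA.2.
suff AN0 : A *m N = 0 by rewrite mulmxA AN0 mul0mx.
apply/matrixP => i j; have /(psd_kernel pA) : qform A (col j N) (col j N) = 0.
  exact: (psumr_eq0P (fun j _ => pA.2 (col j N)) tr0).
by rewrite colE mulmxA -colE => /matrixP/(_ i 0); rewrite !mxE.
Qed.

Lemma pd_det_neq0 A : pdmx A -> \det A != 0.
Proof.
move=> [sA pA]; apply/negP => /det0P [v nv vA].
have : 0 < qform A v^T v^T by apply: pA; rewrite trmx_eq0.
by rewrite /qform trmxK vA mul0mx mxE ltxx.
Qed.

Lemma pd_psd A : pdmx A -> psdmx A.
Proof.
move=> [sA pA]; split=> // x; have [->|x0] := eqVneq x 0; last exact: ltW (pA x x0).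
by rewrite /qform trmx0 !mul0mx mxE.
Qed.

Lemma psd_det_pd A : psdmx A -> \det A != 0 -> pdmx A.
Proof.
move=> pA detA; split=> [|x x0]; first exact: pA.1.
rewrite lt0r pA.2 andbT; apply: contra detA => /eqP/(psd_kernel pA) Ax0.
apply/det0P; exists x^T; first by rewrite trmx_eq0.
by rewrite -[A]pA.1 -trmx_mul Ax0 trmx0.
Qed.
End QuadraticForms.

Section SubspaceBasis.
Variables (F : fieldType) (p : nat) (L : 'M[F]_p -> Prop).
Hypotheses (L0 : L 0) (LD : forall A B, L A -> L B -> L (A + B))
  (LZ : forall c A, L A -> L (c *: A)).

Definition spans_in m (B : 'M[F]_(m, p * p)) := forall c, L (vec_mx (c *m B)).

Lemma spans_in_col_mx m (B : 'M[F]_(m, p * p)) K :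
  spans_in B -> L K -> spans_in (col_mx B (mxvec K)).
Proof.
move=> sB LK c; rewrite -[c]hsubmxK mul_row_col linearD /=; apply: LD => //.
by rewrite [rsubmx c]mx11_scalar mul_scalar_mx linearZ /= mxvecK; exact: LZ.
Qed.

(* Some matrix of L-vectors spans all of L: add elements of L outside the
   current row space until the rank cannot grow any more. *)
Lemma spanning_mx_exists : exists m (B : 'M[F]_(m, p * p)),
  spans_in B /\ forall K, L K -> (mxvec K <= B)%MS.
Proof.
suff grow k m (B : 'M[F]_(m, p * p)) : spans_in B -> (p * p - \rank B < k)%N ->
    exists m (B : 'M[F]_(m, p * p)), spans_in B /\ forall K, L K -> (mxvec K <= B)%MS.
  by apply: (grow (p * p).+1 0%N 0) => [c|]; rewrite ?mulmx0 ?linear0 ?ltnS ?leq_subr.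
elim: k m B => [//|k IH] m B sB rk.
have [[K [LK nK]]|full] := pselect (exists K, L K /\ ~~ (mxvec K <= B)%MS); last first.
  exists m, B; split => // K LK; apply: contrapT => nK; apply: full.
  by exists K; split => //; apply/negP.
apply: (IH _ _ (spans_in_col_mx sB LK)).
have : (B < col_mx B (mxvec K))%MS.
  by rewrite ltmxE -addsmxE addsmxSl /= col_mx_sub submx_refl.
rewrite ltmxErank => /andP[_].
by have := rank_leq_col (col_mx B (mxvec K)); lia.
Qed.

Lemma subspace_basis : exists r (B : 'M[F]_(r, p * p)),
  [/\ row_free B, spans_in B & forall K, L K -> exists c, K = vec_mx (c *m B)].
Proof.
have [m [B [sB spanB]]] := spanning_mx_exists.
exists (\rank B), (row_base B); split; first exact: row_base_free.
- move=> c; have /submxP[d ->] : (c *m row_base B <= B)%MS.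
    by rewrite -(eq_row_base B) submxMl.
  exact: sB.
- move=> K /spanB; rewrite -(eq_row_base B) => /submxP[c cE].
  by exists c; rewrite -cE mxvecK.
Qed.
End SubspaceBasis.

Lemma row_linear_expand (R : pzRingType) (V : lmodType R) r (f : 'rV[R]_r -> V) :
  (forall a c d, f (a *: c + d) = a *: f c + f d) ->
  forall c, f c = \sum_k c 0 k *: f (delta_mx 0 k).
Proof.
move=> f_lin; have f0 : f 0 = 0.
  have := f_lin 1 0 0; rewrite !scale1r addr0 => f00.
  by apply: (addrI (f 0)); rewrite addr0 -f00.
move=> c; rewrite {1}[c]matrix_sum_delta big_ord1.
by elim: (index_enum _) => [|k s IH]; rewrite ?big_nil ?big_cons ?f_lin ?IH.
Qed.

Section Continuity.
Variables (K : realType) (T : topologicalType).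

(* The determinant is a polynomial in the entries, hence continuous. *)
Lemma continuous_det n (M : T -> 'M[K]_n) :
  (forall i j, continuous (fun t => M t i j)) -> continuous (fun t => \det (M t)).
Proof.
move=> cM; rewrite /determinant.
apply: (@continuous_big K _ +%R 0 xpredT add_continuous) => s _ t.
apply: cvgM; first exact: cvg_cst.
by apply: (@continuous_big K _ *%R 1 xpredT mul_continuous) => i _; exact: cM.
Qed.

Lemma continuous_linear_form r (f : 'rV[K]_r -> K) :
  (forall a c d, f (a *: c + d) = a * f c + f d) -> continuous f.
Proof.
move=> f_lin; have fE := row_linear_expand f_lin.
rewrite (funext fE); apply: (@continuous_big K _ +%R 0 xpredT add_continuous).
move=> k _ c; apply: (@continuousM _ _ (fun M : 'rV[K]_r => M 0 k) (fun=> _)).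
  exact: coord_continuous.
exact: cst_continuous.
Qed.
End Continuity.

Lemma mx_entry_le_norm (K : realDomainType) m n (M : 'M[K]_(m, n)) i j :
  `|M i j| <= `|M|.
Proof.
rewrite [leRHS]/Num.Def.normr /= mx_normrE.
exact: (le_bigmax 0 (fun ij : 'I_m * 'I_n => `|M ij.1 ij.2|) (i, j)).
Qed.

(* Leibniz expansion: |det A| <= n! M^n when all entries are bounded by M. *)
Lemma det_bound (F : realFieldType) n (A : 'M[F]_n) M :
  (forall i j, `|A i j| <= M) -> `|\det A| <= M ^+ n *+ n`!.
Proof.
move=> AM; apply: le_trans (ler_norm_sum _ _ _) _.
rewrite -card_Sn -sumr_const; apply: ler_sum => s _.
rewrite normrM normr_sign mul1r normr_prod -[in leRHS](card_ord n) -prodr_const.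
by apply: ler_prod => i _; rewrite normr_ge0 AM.
Qed.

(* Quantitative form of "the exponential beats every polynomial": if
   g <= a t^n e^(-m t) with g, m, t > 0, then t is bounded. *)
Lemma exp_dominates (K : realType) n (a g m t : K) : 0 < g -> 0 < m -> 0 < t ->
  g <= a * t ^+ n * expR (- (m * t)) -> t <= a * n.+1`!%:R / (g * m ^+ n.+1).
Proof.
move=> g0 m0 t0 gle; set E := expR (m * t).
have gE : g * E <= a * t ^+ n.
  have := ler_wpM2r (expR_ge0 (m * t)) gle.
  by rewrite /E expRN mulfVK // gt_eqF // expR_gt0.
have Ebig : (m * t) ^+ n.+1 / n.+1`!%:R <= E.
  by apply: le_trans (expR_ge1Dxn n (ltW (mulr_gt0 m0 t0))); rewrite lerDr.
have fact0 : 0 < n.+1`!%:R :> K by rewrite ltr0n fact_gt0.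
have key := le_trans (ler_wpM2l (ltW g0) Ebig) gE.
rewrite ler_pdivlMr ?mulr_gt0 ?exprn_gt0 // -(ler_pM2r (exprn_gt0 n t0)).
have -> : t * (g * m ^+ n.+1) * t ^+ n =
    n.+1`!%:R * (g * ((m * t) ^+ n.+1 / n.+1`!%:R)).
  by rewrite exprMn !exprSr; field; rewrite gt_eqF.
by rewrite [leRHS]mulrAC [leRHS]mulrC ler_wpM2l // ltW.
Qed.

(* Positive definite matrices have positive determinant: along the segment
   from the identity to A every matrix is positive definite, hence invertible,
   and the determinant is continuous. *)
Lemma pd_det_gt0 (K : realType) n (A : 'M[K]_n) : pdmx A -> 0 < \det A.
Proof.
move=> [sA pA]; pose f t := \det ((1 - t) *: (1%:M : 'M[K]_n) + t *: A).
have f_neq0 t : 0 <= t <= 1 -> f t != 0.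
  move=> /andP[t0 t1]; apply: pd_det_neq0; split.
    by rewrite /symmx linearD !linearZ /= trmx1 sA.
  move=> x x0; rewrite qformD !qformZ.
  have [t_lt1|t_ge1] := ltP t 1.
    apply: lt_le_trans (_ : 0 < (1 - t) * qform 1%:M x x) _.
      by rewrite mulr_gt0 ?subr_gt0 //; exact: (pdmx1 K n).2.
    by rewrite lerDl mulr_ge0 // ltW // pA.
  have -> : t = 1 by apply/eqP; rewrite eq_le t1 t_ge1.
  by rewrite subrr mul0r add0r mul1r pA.
have f_cont : continuous f.
  apply: continuous_det => i j.
  have -> : (fun t => ((1 - t) *: (1%:M : 'M[K]_n) + t *: A) i j) =
      (fun t => (1 - t) * (i == j)%:R + t * A i j).
    by apply: funext => t; rewrite !mxE.
  move=> t; apply: cvgD; apply: cvgM; try exact: cvg_cst; try exact: cvg_id.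
  by apply: cvgB; [exact: cvg_cst | exact: cvg_id].
rewrite ltNge; apply/negP => detA.
have [c c01 fc0] : exists2 c, c \in `[0, 1] & f c = 0.
  apply: IVT => //; first exact: continuous_subspaceT.
  have -> : f 0 = 1 by rewrite /f subr0 scale1r scale0r addr0 det1.
  have -> : f 1 = \det A by rewrite /f subrr scale0r add0r scale1r.
  by rewrite ge_min detA orbT le_max ler01.
by move: c01; rewrite in_itv /= => /f_neq0; rewrite fc0 eqxx.
Qed.

Local Open Scope classical_set_scope.

(* The maximization, in the coordinates c of a linear parametrization phi of
   the model subspace: cI are the coordinates of the identity, and [no_null]
   says that the origin is the only psd point of zero energy. *)
Section Maximizer.
Variables (K : realType) (p r : nat) (phi : 'rV[K]_r -> 'M[K]_p).
Variables (W : 'M[K]_p) (cI : 'rV[K]_r).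
Hypotheses (phi_lin : forall a c d, phi (a *: c + d) = a *: phi c + phi d)
  (phi_sym : forall c, symmx (phi c)) (pW : psdmx W) (phi_cI : phi cI = 1%:M)
  (no_null : forall c, psdmx (phi c) -> \tr (phi c *m W) = 0 -> c = 0).

(* The linear energy tr(K W), the likelihood exp(l(K)) = det K exp(-tr(K W)),
   which is continuous on the whole coordinate space, and the psd cone. *)
Let h c := \tr (phi c *m W).
Let g c := \det (phi c) * expR (- h c).
Let PS := [set c | psdmx (phi c)].

Let phi0 : phi 0 = 0.
Proof. by rewrite (row_linear_expand phi_lin) big1 // => k _; rewrite mxE scale0r. Qed.
Let phiZ a c : phi (a *: c) = a *: phi c.
Proof. by rewrite -[a *: c]addr0 phi_lin phi0 addr0. Qed.

Let h0 : h 0 = 0.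
Proof. by rewrite /h phi0 mul0mx mxtrace0. Qed.

Let h_cont : continuous h.
Proof.
apply: continuous_linear_form => a c d.
by rewrite /h phi_lin mulmxDl -scalemxAl mxtraceD mxtraceZ.
Qed.

Let g_cont : continuous g.
Proof.
have det_cont : continuous (fun c => \det (phi c)).
  apply: continuous_det => i j; apply: continuous_linear_form => a b d.
  by rewrite phi_lin !mxE.
move=> c; apply: (@continuousM _ _ (fun c => \det (phi c)) (fun c => expR (- h c))).
  exact: det_cont.
apply: (@continuous_comp _ _ _ (fun c => - h c) expR); last exact: continuous_expR.
exact: (continuousN (@h_cont c)).
Qed.

(* PS is a closed cone: an intersection of closed half-spaces. *)
Let PS_closed : closed PS.
Proof.
have -> : PS = \bigcap_(x in [set: 'cV[K]_p]) [set c | 0 <= qform (phi c) x x].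
  apply/seteqP; split=> [c pc x _|c pc]; first exact: pc.2.
  by split=> [|x]; [exact: phi_sym | exact: pc x I].
apply: closed_bigI => x _; apply: (continuous_closedP _).1 (@closed_ge K 0).
by apply: continuous_linear_form => a c d; rewrite phi_lin qformD qformZ.
Qed.

Let PS_scale a c : 0 <= a -> PS c -> PS (a *: c).
Proof.
move=> a0 [_ pc]; split=> [|x]; first exact: phi_sym.
by rewrite phiZ qformZ mulr_ge0.
Qed.

(* Coercivity: the energy grows linearly on the cone PS, by compactness of
   its intersection with the unit sphere and the absence of null directions. *)
Let coercive : exists2 m, 0 < m & forall c, PS c -> m * `|c| <= h c.
Proof.
have h_hom a c : h (a *: c) = a * h c by rewrite /h phiZ -scalemxAl mxtraceZ.
pose Sph := [set c : 'rV[K]_r | `|c| = 1] `&` PS.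
have normalize c : PS c -> c != 0 -> Sph (`|c|^-1 *: c).
  move=> pc c0; split; last by apply: PS_scale; rewrite ?invr_ge0.
  by rewrite /= normrZ normfV normr_id mulVf // normr_eq0.
have scaleK c : c != 0 -> h c = `|c| * h (`|c|^-1 *: c).
  by move=> c0; rewrite h_hom mulrA mulfV ?mul1r // normr_eq0.
have [[c1 Sc1]|Sph0] := pselect (Sph !=set0); last first.
  exists 1 => // c pc; have [->|c0] := eqVneq c 0; first by rewrite normr0 mulr0 h0.
  by exfalso; apply: Sph0; exists (`|c|^-1 *: c); exact: normalize.
have Sph_compact : compact Sph.
  apply: bounded_closed_compact; last first.
    apply: closedI => //; apply: (continuous_closedP _).1 (@closed_eq K 1).
    exact: norm_continuous.
  exists 1; split=> [|M M1 c [/= -> _]]; [exact: num_real | exact: ltW].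
have [u /set_mem [u_norm pu] h_min] :=
  EVT_min_rV (ex_intro _ c1 Sc1) Sph_compact (continuous_subspaceT h_cont).
exists (h u).
  rewrite lt0r (trace_psd pu pW).1 andbT; apply/eqP => /(no_null pu) u0.
  by move: u_norm; rewrite /= u0 normr0 => /esym/eqP; rewrite oner_eq0.
move=> c pc; have [->|c0] := eqVneq c 0; first by rewrite normr0 mulr0 h0.
rewrite (scaleK c c0) mulrC ler_wpM2l //; apply: h_min; apply: mem_set.
exact: normalize.
Qed.

Let phi_bound : exists2 C, 0 <= C & forall c, `|phi c| <= C * `|c|.
Proof.
exists (\sum_k `|phi (delta_mx 0 k)|); first by rewrite sumr_ge0.
move=> c; rewrite (row_linear_expand phi_lin c) mulr_suml.
apply: le_trans (ler_norm_sum _ _ _) _; apply: ler_sum => k _.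
by rewrite normrZ [leRHS]mulrC ler_wpM2r // mx_entry_le_norm.
Qed.

Let g_cI_gt0 : 0 < g cI.
Proof. by rewrite /g phi_cI det1 mul1r expR_gt0. Qed.

(* The superlevel set {g >= g(cI)} meets the cone PS in a bounded set:
   det grows polynomially while exp(-energy) decays exponentially. *)
Let S := PS `&` [set c | g cI <= g c].

Let S_bounded : exists T, forall c, S c -> `|c| <= T.
Proof.
have [m m0 h_ge] := coercive; have [C C0 phi_le] := phi_bound.
set a := C ^+ p *+ p`!.
have a0 : 0 <= a by rewrite mulrn_wge0 // exprn_ge0.
exists (a * p.+1`!%:R / (g cI * m ^+ p.+1)) => c [pc gc].
have [->|c0] := eqVneq c 0.
  rewrite normr0; apply: divr_ge0; first by rewrite mulr_ge0 ?ler0n.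
  by apply: mulr_ge0; [exact: ltW | rewrite exprn_ge0 // ltW].
apply: (@exp_dominates K p a (g cI) m `|c|) => //; first by rewrite normr_gt0.
apply: le_trans gc _; rewrite /g.
apply: le_trans (ler_wpM2r (expR_ge0 _) (real_ler_norm (num_real _))) _.
apply: ler_pM; rewrite ?normr_ge0 ?expR_ge0 //; last by rewrite ler_expR lerN2 h_ge.
rewrite /a mulrnAl -exprMn; apply: det_bound => i j.
exact: le_trans (mx_entry_le_norm _ i j) (phi_le c).
Qed.

Lemma maximizer_exists : exists c0, pdmx (phi c0) /\
  forall c, pdmx (phi c) -> g c <= g c0.
Proof.
have [T S_le] := S_bounded.
have S_compact : compact S.
  apply: bounded_closed_compact.
    exists T; split=> [|M MT c Sc]; first exact: num_real.
    exact: le_trans (S_le c Sc) (ltW MT).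
  apply: closedI => //; apply: (continuous_closedP _).1 (@closed_ge K (g cI)).
  exact: g_cont.
have S_cI : S cI.
  by split; [rewrite /PS /= phi_cI; exact: pd_psd (pdmx1 K p) | exact: lexx].
have [c0 /set_mem [pc0 gc0] g_max] :=
  EVT_max_rV (ex_intro _ cI S_cI) S_compact (continuous_subspaceT g_cont).
exists c0; split.
  apply: psd_det_pd pc0 _; rewrite gt_eqF // -(pmulr_lgt0 _ (expR_gt0 (- h c0))).
  exact: lt_le_trans g_cI_gt0 gc0.
move=> c pdc; have [gc|gc] := leP (g cI) (g c).
  by apply: g_max; apply: mem_set; split=> //; exact: pd_psd.
exact: le_trans (ltW gc) gc0.
Qed.
End Maximizer.

(* l(K) = log det K - tr(K W) is the logarithm of the likelihood used above. *)
Lemma ln_mul_expR (F : realType) (x y : F) : 0 < x -> ln x - y = ln (x * expR (- y)).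
Proof. by move=> x0; rewrite lnM ?posrE ?expR_gt0 // expRK. Qed.

Theorem mle_exists (F : realType) p (L : 'M[F]_p -> Prop) (W : 'M[F]_p) :
  L 0 -> (forall A B, L A -> L B -> L (A + B)) ->
  (forall c A, L A -> L (c *: A)) -> (forall A, L A -> symmx A) ->
  L 1%:M -> psdmx W ->
  (forall D, L D -> psdmx D -> \tr (D *m W) = 0 -> D = 0) ->
  exists K0, [/\ L K0, pdmx K0 & forall K, L K -> pdmx K ->
    ln (\det K) - \tr (K *m W) <= ln (\det K0) - \tr (K0 *m W)].
Proof.
move=> L0 LD LZ Lsym LI pW no_null.
have [r [B [Bfree LB Bspan]]] := subspace_basis L0 LD LZ.
pose phi c : 'M[F]_p := vec_mx (c *m B).
have phi_lin a c d : phi (a *: c + d) = a *: phi c + phi d.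
  by rewrite /phi mulmxDl -scalemxAl linearD linearZ.
have [cI cIE] := Bspan _ LI.
have [|c0 [pd0 c0_max]] :=
  maximizer_exists phi_lin (fun c => Lsym _ (LB c)) pW (esym cIE).
  move=> c pc /(no_null _ (LB c) pc) /eqP.
  by rewrite vec_mx_eq0 mulmx_free_eq0 // => /eqP.
exists (phi c0); split=> [|//|_ /Bspan [c ->] pdc]; first exact: LB.
rewrite !ln_mul_expR ?pd_det_gt0 // ler_ln ?posrE ?mulr_gt0 ?expR_gt0 ?pd_det_gt0 //.
exact: c0_max.
Qed.

Lemma psd_psdmx p (A : 'M[R]_p) : psd A -> psdmx A.
Proof. by move=> [sA pA]; split=> // x; apply/RleP; exact: pA. Qed.

Lemma posdef_pdmx p (A : 'M[R]_p) : posdef A <-> pdmx A.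
Proof.
split=> -[sA pA]; split=> // x.
  by move=> /eqP x0; apply/RltP; exact: pA.
by move=> x0; apply/RltP; apply: pA; apply/eqP.
Qed.

Lemma loglikE p (W K : 'M[R]_p) : loglik W K = ln (\det K) - \tr (K *m W).
Proof. by rewrite /loglik RlnE. Qed.

(* Uniqueness of the solution of the score matching equation rules out psd
   directions D of L with tr(D W) = 0: such a D has D W = 0, hence D o W = 0,
   and K + D would be a second solution. *)
Lemma score_unique_no_null p (L : 'M[R]_p -> Prop) (W : 'M[R]_p) :
  subspace_of_Sym L -> psdmx W ->
  (exists! K, L K /\ is_projL L (circ K W) 1%:M) ->
  forall D, L D -> psdmx D -> \tr (D *m W) = 0 -> D = 0.
Proof.
move=> [_ LD _ _] pW [Ks [[LKs projKs] Ks_unique]] D LD0 pD trDW.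
have DW0 : D *m W = 0 := (trace_psd pD pW).2 trDW.
have WD0 : W *m D = 0 by rewrite -[W]pW.1 -[D]pD.1 -trmx_mul DW0 trmx0.
have circE : circ (Ks + D) W = circ Ks W.
  by rewrite /circ [(Ks + D)^T]linearD /= pW.1 pD.1 mulmxDl mulmxDr DW0 WD0 !addr0.
have KsD : Ks = Ks + D.
  by apply: Ks_unique; split; [exact: LD | rewrite circE].
by apply: (addrI Ks); rewrite addr0 -KsD.
Qed.

Theorem proposition3 (p : nat) (L : 'M[R]_p -> Prop) (W : 'M[R]_p) :
  subspace_of_Sym L ->
  L (1%:M)%R ->
  psd W ->
  (exists! K : 'M[R]_p, L K /\ is_projL L (circ K W) (1%:M)%R) ->
  exists K0 : 'M[R]_p,
    [/\ L K0, posdef K0 &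
        forall K : 'M[R]_p, L K -> posdef K -> Rle (loglik W K) (loglik W K0)].
Proof.
move=> LSym LI /psd_psdmx pW score_unique; have [L0 LD LZ Lsym] := LSym.
have no_null := score_unique_no_null LSym pW score_unique.
have [K0 [LK0 pdK0 K0_max]] := mle_exists L0 LD LZ Lsym LI pW no_null.
exists K0; split=> //; first exact/posdef_pdmx.
move=> K LK /posdef_pdmx pdK; apply/RleP; rewrite !loglikE; exact: K0_max.
Qed.
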